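(* Consider the exact value iteration $P_{i+1}=\mathcal R(P_i,S)$ with $P_0\in\mathbb S^n_+$. Fix $\theta\in(\rho(A^* ),1)$ and a constant $C_\theta\ge1$ such that $\|(A^* )^i\|_2\le C_\theta\theta^i$ for all $i\ge0$. Let $\nu=\|A^*\|_2^2\,\|BR^{-1}B^\top\|_2$, assume $\nu>0$, and set $\delta_\theta=\dfrac{\theta^2(1-\theta^2)}{4\nu C_\theta^4}$. If $\|P_0-P^*\|_2\le\delta_\theta$, then for all $i\in\mathbb Z_+$, $$\|P_i-P^*\|_2\le 2C_\theta^2\,\theta^{2i}\,\|P_0-P^*\|_2.$$
   Context: Let $n,m\ge 1$, $A\in\mathbb R^{n\times n}$, $B\in\mathbb R^{n\times m}$, $S\in\mathbb S^n_{++}$, $R\in\mathbb S^m_{++}$, with $(A,B)$ stabilizable. $\mathbb S^n$, $\mathbb S^n_+$, $\mathbb S^n_{++}$ denote symmetric, positive semidefinite, positive definite $n\times n$ matrices; $\|\cdot\|_2$ spectral norm; $\rho$ spectral radius. For $P\in\mathbb S^n_+$ and $S'\in\mathbb S^n$, $\mathcal R(P,S')=A^\top PA-A^\top PB(R+B^\top PB)^{-1}B^\top PA+S'$. $P^*\in\mathbb S^n_{++}$ is the unique positive definite solution of $P=\mathcal R(P,S)$, $K^*=(R+B^\top P^*B)^{-1}B^\top P^*A$, $A^*=A-BK^*$, with $\rho(A^* )<1$ (so such $C_\theta$ exists). *)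

From HB Require Import structures.
From mathcomp Require Import all_boot all_order all_algebra.
From mathcomp Require Import all_classical all_reals.
Set Implicit Arguments. Unset Strict Implicit. Unset Printing Implicit Defensive.
Import Order.TTheory GRing.Theory Num.Theory.
Local Open Scope ring_scope.
Local Open Scope classical_set_scope.

Section Defs.
Variable R : realType.

Definition vnorm2 (k : nat) (x : 'cV[R]_k) : R :=
  Num.sqrt (\sum_(i < k) x i 0 ^+ 2).

Definition specnorm (p q : nat) (M : 'M[R]_(p, q)) : R :=
  sup [set e : R | exists x : 'cV[R]_q, x != 0 /\ e = vnorm2 (M *m x) / vnorm2 x].

(* a + i b is a (complex) eigenvalue of the real matrix M: there is a nonzero
   complex vector u + i v with M (u + i v) = (a + i b)(u + i v), written in
   real coordinates. *)
Definition is_complex_eigenvalue (k : nat) (M : 'M[R]_k) (a b : R) : Prop :=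
  exists u v : 'cV[R]_k, (u != 0 \/ v != 0) /\
    M *m u = a *: u - b *: v /\ M *m v = b *: u + a *: v.

Definition specrad (k : nat) (M : 'M[R]_k) : R :=
  sup [set r : R | exists a b : R, is_complex_eigenvalue M a b /\
                   r = Num.sqrt (a ^+ 2 + b ^+ 2)].

Definition symmetric (k : nat) (M : 'M[R]_k) : Prop := M^T = M.
Definition psd (k : nat) (M : 'M[R]_k) : Prop :=
  symmetric M /\ forall x : 'cV[R]_k, 0 <= (x^T *m M *m x) 0 0.
Definition pd (k : nat) (M : 'M[R]_k) : Prop :=
  symmetric M /\ forall x : 'cV[R]_k, x != 0 -> 0 < (x^T *m M *m x) 0 0.

Definition stabilizable (n m : nat) (A : 'M[R]_n) (B : 'M[R]_(n, m)) : Prop :=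
  exists K : 'M[R]_(m, n), specrad (A - B *m K) < 1.

Definition riccati (n m : nat) (A : 'M[R]_n) (B : 'M[R]_(n, m)) (Rm : 'M[R]_m)
  (P S' : 'M[R]_n) : 'M[R]_n :=
  A^T *m P *m A - A^T *m P *m B *m invmx (Rm + B^T *m P *m B) *m B^T *m P *m A + S'.

Definition value_iter (n m : nat) (A : 'M[R]_n) (B : 'M[R]_(n, m)) (Rm : 'M[R]_m)
  (S P0 : 'M[R]_n) (i : nat) : 'M[R]_n :=
  iter i (fun P => riccati A B Rm P S) P0.

Definition gain (n m : nat) (A : 'M[R]_n) (B : 'M[R]_(n, m)) (Rm : 'M[R]_m)
  (P : 'M[R]_n) : 'M[R]_(m, n) :=
  invmx (Rm + B^T *m P *m B) *m B^T *m P *m A.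

End Defs.

From Pilot Require Import Defs.
From HB Require Import structures.
From mathcomp Require Import all_boot all_order all_algebra.
From mathcomp Require Import all_classical all_reals.
From mathcomp Require Import ring lra.
Import Order.TTheory GRing.Theory Num.Theory.
Local Open Scope ring_scope.
Set Implicit Arguments. Unset Strict Implicit. Unset Printing Implicit Defensive.

(* Write D_i = P_i - P_* and A_* = A - B K_*.  Completing the square in the Riccati
   operator gives the exact error recursion
     D_{i+1} = A_*^T D_i A_* - A_*^T D_i B (R + B^T P_i B)^-1 B^T D_i A_*,
   and since (R + B^T P_i B)^-1 <= R^-1 the quadratic remainder has norm at most
   nu ||D_i||^2.  Unrolling the linear part with ||A_*^j|| <= C theta^j yields
     ||D_i|| <= C^2 theta^(2i) ||D_0|| + sum_(l<i) C^2 theta^(2(i-1-l)) nu ||D_l||^2,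
   and a strong induction closes: once ||D_l|| <= 2 C^2 theta^(2l) ||D_0|| for l < i,
   the smallness of ||D_0|| turns the sum into a geometric series bounded by
   C^2 theta^(2i) ||D_0||. *)

Lemma sqr_le_of_quadratic_ge0 (R : realFieldType) (a b c : R) : 0 <= a ->
  (forall t, 0 <= t ^+ 2 * a - 2 * t * b + c) -> b ^+ 2 <= a * c.
Proof.
move=> a_ge0 H; have [a0|a_neq0] := eqVneq a 0.
  rewrite a0 mul0r; have [->|b_neq0] := eqVneq b 0; first by rewrite expr0n.
  have := H ((c + 1) / (2 * b)); rewrite a0 mulr0 add0r.
  have -> : 2 * ((c + 1) / (2 * b)) * b = c + 1 by field.
  lra.
have a_gt0 : 0 < a by rewrite lt_def a_neq0.
have := H (b / a).
have -> : (b / a) ^+ 2 * a - 2 * (b / a) * b + c = (a * c - b ^+ 2) / a by field.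
by rewrite pmulr_lge0 ?invr_gt0 // subr_ge0.
Qed.

Section QuadraticForms.
Variable R : realType.

Definition mxform k (M : 'M[R]_k) (y x : 'cV[R]_k) : R := (y^T *m M *m x) 0 0.

Lemma mxformC k (M : 'M[R]_k) y x : M^T = M -> mxform M x y = mxform M y x.
Proof.
move=> sM; have trE (N : 'M[R]_1) : N 0 0 = N^T 0 0 by rewrite mxE.
by rewrite /mxform trE !trmx_mul trmxK sM !mulmxA.
Qed.

Lemma mxformD k (M N : 'M[R]_k) y x : mxform (M + N) y x = mxform M y x + mxform N y x.
Proof. by rewrite /mxform mulmxDr mulmxDl mxE. Qed.

Lemma mxform_trmx_mul k l (N : 'M[R]_(k, l)) (M : 'M[R]_k) y x :
  mxform (N^T *m M *m N) y x = mxform M (N *m y) (N *m x).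
Proof. by rewrite /mxform trmx_mul !mulmxA. Qed.

Lemma mxform_lincomb k (M : 'M[R]_k) y x t : M^T = M ->
  mxform M (t *: y - x) (t *: y - x) =
  t ^+ 2 * mxform M y y - 2 * t * mxform M y x + mxform M x x.
Proof.
move=> sM; have := mxformC y x sM; rewrite /mxform.
have -> : (t *: y - x)^T = t *: y^T - x^T by rewrite linearB linearZ.
rewrite !mulmxBl !mulmxBr -!scalemxAl -!scalemxAr !mxE => ->; ring.
Qed.

Lemma psd_mxform_ge0 k (M : 'M[R]_k) x : psd M -> 0 <= mxform M x x.
Proof. by case=> _; apply. Qed.

Lemma psd_cauchy_schwarz k (M : 'M[R]_k) y x : psd M ->
  mxform M y x <= Num.sqrt (mxform M y y) * Num.sqrt (mxform M x x).
Proof.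
move=> pM; rewrite -sqrtrM ?psd_mxform_ge0 //.
apply: le_trans (ler_norm _) _; rewrite -sqrtr_sqr ler_sqrt ?mulr_ge0 ?psd_mxform_ge0 //.
apply: sqr_le_of_quadratic_ge0 => [|t]; first exact: psd_mxform_ge0.
by rewrite -mxform_lincomb; [exact: psd_mxform_ge0 | case: pM].
Qed.

Lemma pd_psd k (M : 'M[R]_k) : pd M -> psd M.
Proof.
case=> sM pM; split=> // z; have [->|z0] := eqVneq z 0; last exact/ltW/pM.
by rewrite mulmx0 mxE.
Qed.

Lemma psdD k (M N : 'M[R]_k) : psd M -> psd N -> psd (M + N).
Proof.
move=> [sM pM] [sN pN]; split; first by rewrite /Defs.symmetric linearD /= sM sN.
by move=> z; rewrite -/(mxform _ z z) mxformD addr_ge0 ?pM ?pN.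
Qed.

Lemma psd_trmx_mul k l (N : 'M[R]_(k, l)) (M : 'M[R]_k) : psd M -> psd (N^T *m M *m N).
Proof.
move=> pM; have [sM _] := pM.
split; first by rewrite /Defs.symmetric !trmx_mul trmxK sM mulmxA.
by move=> z; rewrite -/(mxform _ z z) mxform_trmx_mul psd_mxform_ge0.
Qed.

Lemma pd_addr k (M N : 'M[R]_k) : pd M -> psd N -> pd (M + N).
Proof.
move=> pM pN; have [sMN _] := psdD (pd_psd pM) pN; split=> // z z0.
by rewrite -/(mxform _ z z) mxformD ltr_wpDr ?psd_mxform_ge0 //; case: pM => _; apply.
Qed.

Lemma pd_unitmx k (M : 'M[R]_k) : pd M -> M \in unitmx.
Proof.
case=> _ pM; rewrite unitmxE unitfE; apply/negP => /det0P [v v0 vM].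
have vT0 : v^T != 0 by apply: contra v0 => /eqP h; rewrite -(trmxK v) h trmx0.
by have := pM _ vT0; rewrite trmxK vM mul0mx mxE ltxx.
Qed.

Lemma mxform_invmxr k (M : 'M[R]_k) z y : M \in unitmx ->
  mxform M z (invmx M *m y) = (z^T *m y) 0 0.
Proof. by move=> uM; rewrite /mxform -mulmxA mulKVmx. Qed.

Lemma psd_invmx k (M : 'M[R]_k) : psd M -> M \in unitmx -> psd (invmx M).
Proof.
case=> sM pM uM; have sMi : (invmx M)^T = invmx M by rewrite trmx_inv sM.
split=> // y; have := pM (invmx M *m y); rewrite -/(mxform _ _ _) mxform_invmxr //.
by rewrite trmx_mul sMi.
Qed.

Lemma mxform_invmx_ge k (M : 'M[R]_k) z y : psd M -> M \in unitmx ->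
  2 * (z^T *m y) 0 0 - mxform M z z <= mxform (invmx M) y y.
Proof.
move=> pM uM; have sMi : (invmx M)^T = invmx M by case: (psd_invmx pM uM).
have := psd_mxform_ge0 (1 *: z - invmx M *m y) pM.
rewrite mxform_lincomb; last by case: pM.
rewrite expr1n mul1r mulr1 !mxform_invmxr // /mxform trmx_mul sMi; lra.
Qed.

Lemma mxform_invmx_antitone k (M D : 'M[R]_k) y : pd M -> psd D ->
  mxform (invmx (M + D)) y y <= mxform (invmx M) y y.
Proof.
move=> pM pD; have pMD := pd_addr pM pD; have uMD := pd_unitmx pMD.
set z := invmx (M + D) *m y.
have := mxform_invmx_ge z y (pd_psd pM) (pd_unitmx pM).
have sMDi : (invmx (M + D))^T = invmx (M + D) by case: (psd_invmx (pd_psd pMD) uMD).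
have e1 : (z^T *m y) 0 0 = mxform (invmx (M + D)) y y by rewrite /mxform trmx_mul sMDi.
have e2 : mxform (M + D) z z = (z^T *m y) 0 0 by rewrite mxform_invmxr.
have := psd_mxform_ge0 z pD; rewrite mxformD in e2; lra.
Qed.

Definition dotv k (y x : 'cV[R]_k) : R := (y^T *m x) 0 0.

Lemma dotvE k (y x : 'cV[R]_k) : dotv y x = \sum_i y i 0 * x i 0.
Proof. by rewrite /dotv mxE; apply: eq_bigr => i _; rewrite mxE. Qed.

Lemma dotvC k (y x : 'cV[R]_k) : dotv y x = dotv x y.
Proof. by rewrite !dotvE; apply: eq_bigr => i _; rewrite mulrC. Qed.

Lemma dotvDl k (x y z : 'cV[R]_k) : dotv (x + y) z = dotv x z + dotv y z.
Proof. by rewrite !dotvE -big_split; apply: eq_bigr => i _; rewrite mxE mulrDl. Qed.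

Lemma dotvDr k (x y z : 'cV[R]_k) : dotv z (x + y) = dotv z x + dotv z y.
Proof. by rewrite dotvC dotvDl !(dotvC z). Qed.

Lemma dotv_ge0 k (x : 'cV[R]_k) : 0 <= dotv x x.
Proof. by rewrite dotvE sumr_ge0 // => i _; rewrite -expr2 sqr_ge0. Qed.

Lemma dotv_mulmx p q (M : 'M[R]_(p, q)) y x : dotv y (M *m x) = dotv (M^T *m y) x.
Proof. by rewrite /dotv trmx_mul trmxK mulmxA. Qed.

Lemma mxform_dotv k (M : 'M[R]_k) y x : mxform M y x = dotv y (M *m x).
Proof. by rewrite /mxform /dotv mulmxA. Qed.

Lemma vnorm2E k (x : 'cV[R]_k) : vnorm2 x = Num.sqrt (dotv x x).
Proof. by rewrite /vnorm2 dotvE; congr Num.sqrt; apply: eq_bigr => i _; rewrite expr2. Qed.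

Lemma vnorm2_ge0 k (x : 'cV[R]_k) : 0 <= vnorm2 x.
Proof. by rewrite vnorm2E sqrtr_ge0. Qed.

Lemma sqr_vnorm2 k (x : 'cV[R]_k) : vnorm2 x ^+ 2 = dotv x x.
Proof. by rewrite vnorm2E sqr_sqrtr // dotv_ge0. Qed.

Lemma vnorm2_0 k : vnorm2 (0 : 'cV[R]_k) = 0.
Proof. by rewrite vnorm2E dotvE big1 ?sqrtr0 // => i _; rewrite mxE mul0r. Qed.

Lemma vnorm2_gt0 k (x : 'cV[R]_k) : x != 0 -> 0 < vnorm2 x.
Proof.
move=> x0; rewrite lt_def vnorm2_ge0 andbT; apply: contra x0.
rewrite vnorm2E sqrtr_eq0 dotvE => x_le0.
have /psumr_eq0P x_eq0 : \sum_i x i 0 * x i 0 = 0.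
  by apply/eqP; rewrite eq_le x_le0 sumr_ge0 // => i _; rewrite -expr2 sqr_ge0.
apply/eqP/matrixP => i j; rewrite ord1 mxE; apply/eqP.
by rewrite -sqrf_eq0 expr2 x_eq0 // => l _; rewrite -expr2 sqr_ge0.
Qed.

Lemma dotv_cauchy_schwarz k (y x : 'cV[R]_k) : dotv y x <= vnorm2 y * vnorm2 x.
Proof.
have pI : psd (1%:M : 'M[R]_k).
  by split=> [|z]; [rewrite /Defs.symmetric trmx1 | rewrite mulmx1 dotv_ge0].
by have := psd_cauchy_schwarz y x pI; rewrite !mxform_dotv !mul1mx -!vnorm2E.
Qed.

Lemma vnorm2D k (x y : 'cV[R]_k) : vnorm2 (x + y) <= vnorm2 x + vnorm2 y.
Proof.
rewrite -ler_sqr ?nnegrE ?addr_ge0 ?vnorm2_ge0 // sqrrD !sqr_vnorm2.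
rewrite dotvDl !dotvDr (dotvC y x); have := dotv_cauchy_schwarz x y; lra.
Qed.

Lemma vnorm2N k (x : 'cV[R]_k) : vnorm2 (- x) = vnorm2 x.
Proof.
by rewrite !vnorm2E !dotvE; congr Num.sqrt; apply: eq_bigr => i _; rewrite !mxE mulrNN.
Qed.

Lemma vnorm2_coord k (x : 'cV[R]_k) i : `|x i 0| <= vnorm2 x.
Proof.
rewrite -ler_sqr ?nnegrE ?vnorm2_ge0 // sqr_vnorm2 dotvE real_normK ?num_real //.
rewrite (bigD1 i) //= -expr2 lerDl sumr_ge0 // => l _.
by rewrite -expr2 sqr_ge0.
Qed.

End QuadraticForms.

Section SpectralNorm.
Variable R : realType.
Local Open Scope classical_set_scope.

Lemma mulmx_vnorm2_bounded p q (M : 'M[R]_(p, q)) :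
  exists K, 0 <= K /\ forall x, vnorm2 (M *m x) <= K * vnorm2 x.
Proof.
pose r i := \sum_j `|M i j|.
have r_ge0 i : 0 <= r i by rewrite sumr_ge0.
exists (Num.sqrt (\sum_i r i ^+ 2)); split=> [|x]; first exact: sqrtr_ge0.
have Mx_coord i : `|(M *m x) i 0| <= r i * vnorm2 x.
  rewrite mxE /r mulr_suml; apply: le_trans (ler_norm_sum _ _ _) _.
  by apply: ler_sum => j _; rewrite normrM ler_wpM2l ?vnorm2_coord.
rewrite -ler_sqr ?nnegrE ?mulr_ge0 ?sqrtr_ge0 ?vnorm2_ge0 //.
have sum_ge0 : 0 <= \sum_i r i ^+ 2 by apply: sumr_ge0 => i _; exact: sqr_ge0.
rewrite exprMn sqr_vnorm2 (sqr_sqrtr sum_ge0) dotvE mulr_suml; apply: ler_sum => i _.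
by rewrite -expr2 -exprMn -real_normK ?num_real // ler_sqr ?nnegrE ?mulr_ge0 ?vnorm2_ge0.
Qed.

Let ratios p q (M : 'M[R]_(p, q)) :=
  [set e : R | exists x : 'cV[R]_q, x != 0 /\ e = vnorm2 (M *m x) / vnorm2 x].

Lemma specnorm_le p q (M : 'M[R]_(p, q)) c : 0 <= c ->
  (forall x, vnorm2 (M *m x) <= c * vnorm2 x) -> specnorm M <= c.
Proof.
move=> c0 Mc; rewrite /specnorm -/(ratios M).
have [ne|empty] := pselect (ratios M !=set0); last by rewrite sup_out //; case.
by apply: ge_sup => // _ [x [x0 ->]]; rewrite ler_pdivrMr ?vnorm2_gt0.
Qed.

Lemma ratios_ubound p q (M : 'M[R]_(p, q)) : has_ubound (ratios M).
Proof.
have [K [K0 MK]] := mulmx_vnorm2_bounded M.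
by exists K => _ [y [y0 ->]]; rewrite ler_pdivrMr ?vnorm2_gt0.
Qed.

Lemma vnorm2_mulmx_le p q (M : 'M[R]_(p, q)) x :
  vnorm2 (M *m x) <= specnorm M * vnorm2 x.
Proof.
have [->|x0] := eqVneq x 0; first by rewrite mulmx0 !vnorm2_0 mulr0.
rewrite -ler_pdivrMr ?vnorm2_gt0 //.
by apply: ub_le_sup; [exact: ratios_ubound | exists x].
Qed.

Lemma specnorm_ge0 p q (M : 'M[R]_(p, q)) : 0 <= specnorm M.
Proof.
rewrite /specnorm -/(ratios M).
have [[e Me]|empty] := pselect (ratios M !=set0); last by rewrite sup_out //; case.
apply: le_trans (ub_le_sup (ratios_ubound M) Me).
by case: Me => x [_ ->]; rewrite divr_ge0 ?vnorm2_ge0.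
Qed.

Lemma specnorm_mul p q r (M : 'M[R]_(p, q)) (N : 'M[R]_(q, r)) :
  specnorm (M *m N) <= specnorm M * specnorm N.
Proof.
apply: specnorm_le => [|x]; first by rewrite mulr_ge0 ?specnorm_ge0.
rewrite -mulmxA; apply: le_trans (vnorm2_mulmx_le _ _) _.
by rewrite -mulrA ler_wpM2l ?specnorm_ge0 ?vnorm2_mulmx_le.
Qed.

Lemma specnormD p q (M N : 'M[R]_(p, q)) : specnorm (M + N) <= specnorm M + specnorm N.
Proof.
apply: specnorm_le => [|x]; first by rewrite addr_ge0 ?specnorm_ge0.
rewrite mulmxDl mulrDl; apply: le_trans (vnorm2D _ _) _.
by rewrite lerD ?vnorm2_mulmx_le.
Qed.

Lemma specnormB p q (M N : 'M[R]_(p, q)) : specnorm (M - N) <= specnorm M + specnorm N.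
Proof.
apply: le_trans (specnormD _ _) _; rewrite lerD2l.
by apply: specnorm_le => [|x]; rewrite ?specnorm_ge0 // mulNmx vnorm2N vnorm2_mulmx_le.
Qed.

Lemma specnorm_trmx p q (M : 'M[R]_(p, q)) : specnorm M^T <= specnorm M.
Proof.
apply: specnorm_le => [|y]; first exact: specnorm_ge0.
have [Mty0|Mty_neq0] := eqVneq (vnorm2 (M^T *m y)) 0.
  by rewrite Mty0 mulr_ge0 ?specnorm_ge0 ?vnorm2_ge0.
have Mty_gt0 : 0 < vnorm2 (M^T *m y) by rewrite lt_def Mty_neq0 vnorm2_ge0.
rewrite -(ler_pM2l Mty_gt0) -expr2 sqr_vnorm2 -dotv_mulmx.
apply: le_trans (dotv_cauchy_schwarz _ _) _.
by rewrite mulrC mulrA ler_wpM2r ?vnorm2_ge0 // mulrC vnorm2_mulmx_le.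
Qed.

Lemma specnorm_mul3 p q r s (M1 : 'M[R]_(p, q)) (M2 : 'M[R]_(q, r)) (M3 : 'M[R]_(r, s)) :
  specnorm (M1 *m M2 *m M3) <= specnorm M1 * specnorm M2 * specnorm M3.
Proof.
apply: le_trans (specnorm_mul _ _) _.
by rewrite ler_wpM2r ?specnorm_ge0 ?specnorm_mul.
Qed.

Lemma specnorm_trmx_mul p q (N : 'M[R]_(p, q)) (M : 'M[R]_p) :
  specnorm (N^T *m M *m N) <= specnorm N ^+ 2 * specnorm M.
Proof.
apply: le_trans (specnorm_mul3 _ _ _) _.
have -> : specnorm N ^+ 2 * specnorm M = specnorm N * specnorm M * specnorm N by ring.
by rewrite ler_wpM2r ?specnorm_ge0 // ler_wpM2r ?specnorm_ge0 ?specnorm_trmx.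
Qed.

Lemma mxform_le_specnorm k (N : 'M[R]_k) z : mxform N z z <= specnorm N * vnorm2 z ^+ 2.
Proof.
rewrite mxform_dotv; apply: le_trans (dotv_cauchy_schwarz _ _) _.
by rewrite expr2 mulrA [specnorm N * _]mulrC -mulrA ler_wpM2l ?vnorm2_ge0 ?vnorm2_mulmx_le.
Qed.

Lemma specnorm_psd_le k (M N : 'M[R]_k) : psd M ->
  (forall z, mxform M z z <= mxform N z z) -> specnorm M <= specnorm N.
Proof.
move=> pM MN; apply: specnorm_le => [|x]; first exact: specnorm_ge0.
set y := M *m x; have [y0|y_neq0] := eqVneq (vnorm2 y) 0.
  by rewrite y0 mulr_ge0 ?specnorm_ge0 ?vnorm2_ge0.
have y_gt0 : 0 < vnorm2 y by rewrite lt_def y_neq0 vnorm2_ge0.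
have sqrt_form_le z : Num.sqrt (mxform M z z) <= Num.sqrt (specnorm N) * vnorm2 z.
  have -> : Num.sqrt (specnorm N) * vnorm2 z = Num.sqrt (specnorm N * vnorm2 z ^+ 2).
    by rewrite sqrtrM ?specnorm_ge0 // sqrtr_sqr (ger0_norm (vnorm2_ge0 z)).
  rewrite ler_sqrt; last exact: mulr_ge0 (specnorm_ge0 N) (sqr_ge0 _).
  exact: le_trans (MN z) (mxform_le_specnorm _ _).
have : vnorm2 y ^+ 2 <= Num.sqrt (specnorm N) * vnorm2 y * (Num.sqrt (specnorm N) * vnorm2 x).
  rewrite sqr_vnorm2 /y -mxform_dotv; apply: le_trans (psd_cauchy_schwarz _ _ pM) _.
  by apply: ler_pM; rewrite ?sqrtr_ge0 ?sqrt_form_le.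
by rewrite mulrACA -expr2 (sqr_sqrtr (specnorm_ge0 N)) expr2 mulrCA ler_pM2l.
Qed.

End SpectralNorm.

Section Riccati.
Variables (R : realType) (k l : nat).
Variables (A : 'M[R]_k) (B : 'M[R]_(k, l)) (Rm : 'M[R]_l).
Hypothesis pdRm : pd Rm.

Local Notation denom P := (Rm + B^T *m P *m B).
Local Notation closed_loop P := (A - B *m gain A B Rm P).

Lemma pd_denom P : psd P -> pd (denom P).
Proof. by move=> pP; apply: pd_addr pdRm (psd_trmx_mul B pP). Qed.

Lemma denom_mul_gain P : psd P -> denom P *m gain A B Rm P = B^T *m P *m A.
Proof.
move=> pP; have uM := pd_unitmx (pd_denom pP).
by rewrite /gain -!mulmxA mulKVmx // !mulmxA.
Qed.

Lemma riccati_completion P S K : psd P ->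
  riccati A B Rm P S = (A - B *m K)^T *m P *m (A - B *m K) + K^T *m Rm *m K + S
    - (K - gain A B Rm P)^T *m denom P *m (K - gain A B Rm P).
Proof.
move=> pP; have [sP _] := pP; have [sM _] := pd_denom pP.
set M := denom P in sM *; set G := gain A B Rm P.
have MG : M *m G = B^T *m P *m A by exact: denom_mul_gain.
have GM : G^T *m M = A^T *m P *m B.
  by rewrite -[M in LHS]sM -trmx_mul MG !trmx_mul trmxK sP mulmxA.
rewrite /riccati -/M.
have -> : A^T *m P *m B *m invmx M *m B^T *m P *m A = A^T *m P *m B *m G.
  by rewrite /G /gain !mulmxA.
rewrite [(K - G)^T]linearB /= !mulmxBl !mulmxBr GM -[K^T *m M *m G]mulmxA MG.
rewrite [(A - B *m K)^T]linearB /= trmx_mul !mulmxBl /M !mulmxDr !mulmxDl !mulmxA.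
by apply/matrixP => i j; rewrite !mxE; lra.
Qed.

Lemma riccati_psd P S : psd P -> psd S -> psd (riccati A B Rm P S).
Proof.
move=> pP pS; rewrite (riccati_completion S (gain A B Rm P) pP) subrr mulmx0 subr0.
by apply: psdD => //; apply: psdD; apply: psd_trmx_mul => //; exact: pd_psd.
Qed.

Lemma gain_sub P Ps : psd P -> psd Ps ->
  gain A B Rm Ps - gain A B Rm P =
  - (invmx (denom P) *m B^T *m (P - Ps) *m closed_loop Ps).
Proof.
move=> pP pPs; have uM := pd_unitmx (pd_denom pP).
set Ks := gain A B Rm Ps.
have RKs : Rm *m Ks = B^T *m Ps *m A - B^T *m Ps *m B *m Ks.
  by rewrite -(denom_mul_gain pPs) mulmxDl addrK.
have : denom P *m (Ks - gain A B Rm P) = - (B^T *m (P - Ps) *m closed_loop Ps).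
  rewrite mulmxBr denom_mul_gain // mulmxDl RKs.
  rewrite !mulmxBr !mulmxBl !mulmxA.
  by apply/matrixP => i j; rewrite !mxE; lra.
by move/(congr1 (mulmx (invmx (denom P)))); rewrite mulKmx // => ->; rewrite mulmxN !mulmxA.
Qed.

Lemma riccati_sub P Ps S : psd P -> psd Ps ->
  riccati A B Rm P S - riccati A B Rm Ps S =
  (closed_loop Ps)^T *m (P - Ps) *m closed_loop Ps
  - (closed_loop Ps)^T *m ((P - Ps) *m (B *m invmx (denom P) *m B^T) *m (P - Ps))
    *m closed_loop Ps.
Proof.
move=> pP pPs; have [sP _] := pP; have [sPs _] := pPs.
have [sM _] := pd_denom pP; have uM := pd_unitmx (pd_denom pP).
rewrite (riccati_completion S (gain A B Rm Ps) pP).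
rewrite (riccati_completion S (gain A B Rm Ps) pPs) subrr mulmx0 subr0.
set W := invmx (denom P) *m B^T *m (P - Ps) *m closed_loop Ps.
have sD : (P - Ps)^T = P - Ps by rewrite linearB /= sP sPs.
have WMW : W^T *m denom P *m W = (closed_loop Ps)^T *m
    ((P - Ps) *m (B *m invmx (denom P) *m B^T) *m (P - Ps)) *m closed_loop Ps.
  rewrite /W !trmx_mul trmx_inv sM sD trmxK !mulmxA.
  by rewrite -[_ *m invmx (denom P) *m denom P]mulmxA mulVmx // mulmx1.
rewrite gain_sub // -/W [(- W)^T]linearN /= !mulNmx mulmxN opprK WMW.
set Q := (closed_loop Ps)^T *m (_ *m _ *m _) *m closed_loop Ps.
rewrite [(closed_loop Ps)^T *m (P - Ps)]mulmxBr mulmxBl.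
by apply/matrixP => i j; rewrite !mxE; lra.
Qed.

Lemma specnorm_gain_term_le P : psd P ->
  specnorm (B *m invmx (denom P) *m B^T) <= specnorm (B *m invmx Rm *m B^T).
Proof.
move=> pP; rewrite -[B in B *m invmx _](trmxK B) -[B in B *m invmx Rm](trmxK B).
apply: specnorm_psd_le => [|z].
  have pdM := pd_denom pP.
  by apply: psd_trmx_mul; apply: psd_invmx; [exact: pd_psd | exact: pd_unitmx].
rewrite !mxform_trmx_mul; apply: mxform_invmx_antitone pdRm _.
exact: psd_trmx_mul.
Qed.

Lemma specnorm_remainder_le P Ps : psd P ->
  specnorm ((closed_loop Ps)^T *m ((P - Ps) *m (B *m invmx (denom P) *m B^T) *m (P - Ps))
    *m closed_loop Ps) <=
  specnorm (closed_loop Ps) ^+ 2 * specnorm (B *m invmx Rm *m B^T) * specnorm (P - Ps) ^+ 2.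
Proof.
move=> pP; apply: le_trans (specnorm_trmx_mul _ _) _.
rewrite -mulrA ler_wpM2l ?exprn_ge0 ?specnorm_ge0 //.
apply: le_trans (specnorm_mul3 _ _ _) _.
rewrite mulrAC -expr2 [X in X <= _]mulrC ler_wpM2r ?exprn_ge0 ?specnorm_ge0 //.
exact: specnorm_gain_term_le.
Qed.

End Riccati.

Section ErrorPropagation.
Variables (R : realType) (k : nat) (As : 'M[R]_k) (c q : R) (D E : nat -> 'M[R]_k).
Hypothesis specnorm_conj_pow : forall j Y,
  specnorm ((As ^+ j)^T *m Y *m As ^+ j) <= c * q ^+ j * specnorm Y.
Hypothesis D_step : forall i, D i.+1 = As^T *m D i *m As - E i.

Lemma specnorm_conj_pow_unroll i j :
  specnorm ((As ^+ j)^T *m D i *m As ^+ j) <=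
  c * q ^+ (i + j) * specnorm (D 0) + \sum_(l < i) c * q ^+ (i + j - l.+1) * specnorm (E l).
Proof.
elim: i j => [|i IH] j; first by rewrite big_ord0 addr0 add0n specnorm_conj_pow.
have -> : (As ^+ j)^T *m D i.+1 *m As ^+ j =
    (As ^+ j.+1)^T *m D i *m As ^+ j.+1 - (As ^+ j)^T *m E i *m As ^+ j.
  by rewrite D_step mulmxBr mulmxBl exprS -mulmxE trmx_mul !mulmxA.
apply: le_trans (specnormB _ _) _.
rewrite big_ord_recr /= addKn addSnnS addrA.
exact: lerD (IH j.+1) (specnorm_conj_pow j (E i)).
Qed.

Lemma specnorm_unroll i :
  specnorm (D i) <=
  c * q ^+ i * specnorm (D 0) + \sum_(l < i) c * q ^+ (i - l.+1) * specnorm (E l).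
Proof.
have := specnorm_conj_pow_unroll i 0.
by rewrite expr0 -[1]/(1%:M) trmx1 mul1mx mulmx1 addn0.
Qed.

End ErrorPropagation.

Lemma specnorm_conj_pow_le (R : realType) k (M : 'M[R]_k) (C theta : R) :
  (forall j, specnorm (M ^+ j) <= C * theta ^+ j) ->
  forall j Y, specnorm ((M ^+ j)^T *m Y *m M ^+ j) <= C ^+ 2 * (theta ^+ 2) ^+ j * specnorm Y.
Proof.
move=> hC j Y; apply: le_trans (specnorm_trmx_mul _ _) _.
rewrite ler_wpM2r ?specnorm_ge0 // exprAC -exprMn.
by rewrite ler_sqr ?nnegrE ?specnorm_ge0 ?(le_trans (specnorm_ge0 _) (hC j)).
Qed.

Lemma geometric_sum_le (R : realFieldType) (a q : R) n : 0 <= q -> a <= q * (1 - q) ->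
  a * \sum_(l < n) q ^+ l <= q.
Proof.
move=> q0 aq; have G0 : 0 <= \sum_(l < n) q ^+ l by apply: sumr_ge0 => l _; exact: exprn_ge0.
apply: le_trans (ler_wpM2r G0 aq) _.
have -> : q * (1 - q) * \sum_(l < n) q ^+ l = q * (1 - q ^+ n).
  by rewrite -mulrA -opprB mulNr -subrX1 opprB.
by rewrite mulrBr mulr1 lerBlDr lerDl mulr_ge0 ?exprn_ge0.
Qed.

Lemma geometric_quadratic_bound (R : realFieldType) (c q nu : R) (d e : nat -> R) :
  0 <= c -> 0 <= q -> 0 <= nu -> (forall i, 0 <= d i) -> (forall i, e i <= nu * d i ^+ 2) ->
  4 * nu * c ^+ 2 * d 0%N <= q * (1 - q) ->
  (forall i, d i <= c * q ^+ i * d 0%N + \sum_(l < i) c * q ^+ (i - l.+1) * e l) ->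
  forall i, d i <= 2 * c * q ^+ i * d 0%N.
Proof.
move=> c0 q0 nu0 d0 ed small rec; elim/ltn_ind => i IH.
suff tail : \sum_(l < i) c * q ^+ (i - l.+1) * e l <= c * q ^+ i * d 0%N.
  by have := rec i; lra.
case: i IH => [|i] IH; first by rewrite big_ord0 !mulr_ge0 ?exprn_ge0.
set a := 4 * nu * c ^+ 2 * d 0%N in small.
apply: (@le_trans _ _ (\sum_(l < i.+1) c * q ^+ i * d 0%N * a * q ^+ l)).
  apply: ler_sum => l _; rewrite subSS.
  have cq0 : 0 <= c * q ^+ (i - l) by rewrite mulr_ge0 ?exprn_ge0.
  apply: le_trans (ler_wpM2l cq0 (ed l)) _.
  have dl : d l <= 2 * c * q ^+ l * d 0%N := IH l (ltn_ord l).
  have dl2 : d l ^+ 2 <= (2 * c * q ^+ l * d 0%N) ^+ 2.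
    by rewrite ler_sqr ?nnegrE ?d0 ?(le_trans (d0 l) dl).
  apply: le_trans (ler_wpM2l cq0 (ler_wpM2l nu0 dl2)) _.
  have -> : q ^+ i = q ^+ (i - l) * q ^+ l by rewrite -exprD subnK // -ltnS.
  by rewrite /a; nra.
rewrite -mulr_sumr -mulrA.
have -> : c * q ^+ i.+1 * d 0%N = c * q ^+ i * d 0%N * q by rewrite exprS; ring.
by rewrite ler_wpM2l ?mulr_ge0 ?exprn_ge0 ?geometric_sum_le.
Qed.

Unset Implicit Arguments.

Theorem lemma10 (R : realType) (n m : nat)
  (A : 'M[R]_n.+1) (B : 'M[R]_(n.+1, m.+1)) (S : 'M[R]_n.+1) (Rm : 'M[R]_m.+1)
  (hS : pd S) (hR : pd Rm) (hstab : stabilizable A B)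
  (Pstar : 'M[R]_n.+1) (hPstar : pd Pstar) (hric : Pstar = riccati A B Rm Pstar S)
  (P0 : 'M[R]_n.+1) (hP0 : psd P0)
  (theta C : R)
  (htheta1 : specrad (A - B *m gain A B Rm Pstar) < theta) (htheta2 : theta < 1)
  (hC1 : 1 <= C)
  (hC : forall i : nat, specnorm ((A - B *m gain A B Rm Pstar) ^+ i) <= C * theta ^+ i)
  (hnu : 0 < specnorm (A - B *m gain A B Rm Pstar) ^+ 2 * specnorm (B *m invmx Rm *m B^T))
  (hclose : specnorm (P0 - Pstar) <=
     theta ^+ 2 * (1 - theta ^+ 2) /
     (4 * (specnorm (A - B *m gain A B Rm Pstar) ^+ 2 * specnorm (B *m invmx Rm *m B^T))
        * C ^+ 4)) :
  forall i : nat,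
    specnorm (value_iter A B Rm S P0 i - Pstar) <=
      2 * C ^+ 2 * theta ^+ (2 * i) * specnorm (P0 - Pstar).
Proof.
set As := A - B *m gain A B Rm Pstar in hC hnu hclose *.
set nu := specnorm As ^+ 2 * _ in hnu hclose.
set P := value_iter A B Rm S P0.
have P_succ i : P i.+1 = riccati A B Rm (P i) S by [].
have psdP i : psd (P i).
  elim: i => [|i IH]; [exact: hP0 | rewrite P_succ; exact: (riccati_psd A B hR IH (pd_psd hS))].
pose E i := As^T *m ((P i - Pstar) *m (B *m invmx (Rm + B^T *m P i *m B) *m B^T)
  *m (P i - Pstar)) *m As.
have step i : P i.+1 - Pstar = As^T *m (P i - Pstar) *m As - E i.
  by rewrite P_succ {1}hric (riccati_sub A B hR S (psdP i) (pd_psd hPstar)).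
have unroll := specnorm_unroll (specnorm_conj_pow_le hC) step.
have small : 4 * nu * (C ^+ 2) ^+ 2 * specnorm (P 0%N - Pstar) <= theta ^+ 2 * (1 - theta ^+ 2).
  have C_gt0 : 0 < C := lt_le_trans ltr01 hC1.
  have den_gt0 : 0 < 4 * nu * C ^+ 4 by rewrite pmulr_lgt0 ?exprn_gt0 // mulr_gt0.
  by rewrite mulrC -exprM -(ler_pdivlMr _ _ den_gt0).
move=> i; rewrite exprM.
exact: (geometric_quadratic_bound (sqr_ge0 C) (sqr_ge0 theta) (ltW hnu)
  (fun j => specnorm_ge0 _) (fun j => specnorm_remainder_le A B hR Pstar (psdP j)) small unroll i).
Qed.
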